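(* Let $\mathcal A$ be a linear time-invariant algorithm with state-space realization $(A,B,C,D)$ and oracle map $\phi$. If $\mathcal A$ converges to a fixed point $(y^\star,u^\star,x^\star)$, then for every $n\ge1$ its repetition $\mathcal A^n$ converges to the fixed point $(y',u',x^\star)$, where $y'=(y^\star,\dots,y^\star)$ and $u'=(u^\star,\dots,u^\star)$ consist of $n$ stacked copies of $y^\star$ and $u^\star$ respectively.
   Context: The algorithm $\mathcal A$ generates $x^{k+1}=Ax^k+Bu^k$, $y^k=Cx^k+Du^k$, $u^k=\phi(y^k)$. A fixed point of $\mathcal A$ is a triple $(y^\star,u^\star,x^\star)$ with $x^\star=Ax^\star+Bu^\star$, $y^\star=Cx^\star+Du^\star$, $u^\star=\phi(y^\star)$. The repetition $\mathcal A^n$ performs $n$ iterations of $\mathcal A$ as one iteration; its state is that of $\mathcal A$ and its oracle arguments/outputs in one iteration are $(y^{nk},\dots,y^{nk+n-1})$ and $(u^{nk},\dots,u^{nk+n-1})$ stacked; its realization is state matrix $A^n$, input matrix $[A^{n-1}B,\dots,AB,B]$, output matrix with block rows $C,CA,\dots,CA^{n-1}$, and feedthrough matrix with $(r,s)$ block $CA^{r-s-1}B$ for $r>s$, $D$ for $r=s$, $0$ for $r<s$; a fixed point of it is defined analogously (with oracle map $\phi$ applied blockwise). *)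

From HB Require Import structures.
From mathcomp Require Import all_boot all_order all_algebra.
From mathcomp Require Import all_classical all_reals all_analysis.
Set Implicit Arguments. Unset Strict Implicit. Unset Printing Implicit Defensive.
Import Order.TTheory GRing.Theory Num.Theory.
Local Open Scope classical_set_scope.
Local Open Scope ring_scope.

Section LTI.
Variables (R : realType) (nx nu ny : nat).
Implicit Types (A : 'M[R]_nx) (B : 'M[R]_(nx, nu)) (C : 'M[R]_(ny, nx))
  (D : 'M[R]_(ny, nu)) (phi : 'cV[R]_ny -> 'cV[R]_nu).

Definition is_trajectory A B C D phi
  (y : nat -> 'cV[R]_ny) (u : nat -> 'cV[R]_nu) (x : nat -> 'cV[R]_nx) : Prop :=
  forall k, [/\ x k.+1 = A *m x k + B *m u k,
               y k = C *m x k + D *m u k &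
               u k = phi (y k)].

Definition is_fixed_point A B C D phi
  (ys : 'cV[R]_ny) (us : 'cV[R]_nu) (xs : 'cV[R]_nx) : Prop :=
  [/\ xs = A *m xs + B *m us, ys = C *m xs + D *m us & us = phi ys].

Definition converges_to A B C D phi (ys : 'cV[R]_ny) (us : 'cV[R]_nu)
  (xs : 'cV[R]_nx) : Prop :=
  forall y u x, is_trajectory A B C D phi y u x ->
    (* matrices over R^o (= R) carry the entrywise topology of R *)
    [/\ (y : nat -> 'cV[R^o]_ny) @ \oo --> (ys : 'cV[R^o]_ny),
        (u : nat -> 'cV[R^o]_nu) @ \oo --> (us : 'cV[R^o]_nu) &
        (x : nat -> 'cV[R^o]_nx) @ \oo --> (xs : 'cV[R^o]_nx)].
End LTI.

Section Repetition.
Variables (R : realType) (nx nu ny n : nat).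
Variables (A : 'M[R]_nx) (B : 'M[R]_(nx, nu)) (C : 'M[R]_(ny, nx))
  (D : 'M[R]_(ny, nu)) (phi : 'cV[R]_ny -> 'cV[R]_nu).

Definition rep_A : 'M[R]_nx := A ^+ n.

Definition rep_B : 'M[R]_(nx, \sum_(i < n) nu) :=
  \mxrow_(s < n) (A ^+ (n - s.+1) *m B).

Definition rep_C : 'M[R]_(\sum_(i < n) ny, nx) :=
  \mxcol_(r < n) (C *m A ^+ r).

Definition rep_D : 'M[R]_(\sum_(i < n) ny, \sum_(i < n) nu) :=
  \mxblock_(r < n, s < n)
    (if (s < r)%N then C *m A ^+ (r - s.+1) *m B
     else if r == s then D else 0).

Definition rep_phi (Y : 'cV[R]_(\sum_(i < n) ny)) : 'cV[R]_(\sum_(i < n) nu) :=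
  \mxcol_(i < n) phi (submxcol Y i).

Definition stack k (v : 'cV[R]_k) : 'cV[R]_(\sum_(i < n) k) :=
  \mxcol_(i < n) v.
End Repetition.

(** A trajectory of the repetition is a trajectory of the original algorithm read
    [n] steps at a time: unstacking the oracle inputs and outputs of each block
    and running the original recursion from the initial state reproduces the
    repeated algorithm, whose state at iteration [k] is the original state at
    iteration [k * n].  Convergence of the original algorithm along this
    sequence then gives convergence of every block (a subsequence indexed by
    [k * n + s]) and of the state (indexed by [k * n]).  The fixed point part
    is the same block computation applied to constant sequences. *)

From mathcomp Require Import all_boot all_order all_algebra.
From mathcomp Require Import all_classical all_reals all_analysis.
Import Order.TTheory GRing.Theory Num.Theory.
Local Open Scope classical_set_scope.
Local Open Scope ring_scope.

Lemma cvg_mx_entriesP (T : topologicalType) (I : Type) (F : set_system I)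
    (FF : Filter F) m n (f : I -> 'M[T]_(m, n)) (M : 'M[T]_(m, n)) :
  f @ F --> M <-> forall i j, (fun k => f k i j) @ F --> M i j.
Proof.
split=> [fM i j A MA|fM A [P PM sPA]].
  apply: (fM [set N : 'M[T]_(m, n) | A (N i j)]).
  exists (fun i' j' => if (i' == i) && (j' == j) then A else setT).
    by move=> i' j'; case: andP => [[/eqP-> /eqP->]|_] //; exact: filterT.
  by move=> N PN; have := PN i j; rewrite !eqxx.
have : \forall k \near F, forall ij : 'I_m * 'I_n, P ij.1 ij.2 (f k ij.1 ij.2).
  by apply: filter_forall => -[i j]; exact: fM.
by apply: filterS => k Pk; apply: sPA => i j; exact: (Pk (i, j)).
Qed.

Lemma cvg_comp_geq (T : topologicalType) (u : nat -> T) (l : T) (g : nat -> nat) :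
  (forall k, (k <= g k)%N) -> u @ \oo --> l -> (u \o g) @ \oo --> l.
Proof.
move=> g_ge ul; apply: cvg_comp ul.
apply/cvgnyPge => A; near=> k; apply: leq_trans (g_ge k); near: k.
exact: nbhs_infty_ge.
Unshelve. all: end_near.
Qed.

Section Unstack.
Context {T : Type} {N : nat}.
Hypothesis N_gt0 : (0 < N)%N.

Definition unstack {m} (Z : nat -> 'cV[T]_(\sum_(i < N) m)) (k : nat) : 'cV[T]_m :=
  submxcol (Z (k %/ N)%N) (Ordinal (ltn_pmod k N_gt0)).

Lemma unstack_block {m} (Z : nat -> 'cV[T]_(\sum_(i < N) m)) k (s : 'I_N) :
  unstack Z (k * N + s) = submxcol (Z k) s.
Proof.
rewrite /unstack divnMDl // divn_small // addn0; congr (submxcol _ _).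
by apply: val_inj; rewrite /= modnMDl modn_small.
Qed.

Lemma mxcol_unstack {m} (Z : nat -> 'cV[T]_(\sum_(i < N) m)) k :
  Z k = \mxcol_(s < N) unstack Z (k * N + s).
Proof.
by rewrite -[Z k]submxcolK; apply: eq_mxcol => s; rewrite unstack_block.
Qed.

Lemma block_index_ind (P : nat -> Prop) :
  (forall k (s : 'I_N), P (k * N + s)%N) -> forall t, P t.
Proof.
by move=> Ps t; rewrite (divn_eq t N); exact: (Ps _ (Ordinal (ltn_pmod t N_gt0))).
Qed.

End Unstack.

Lemma cvg_unstack (T : topologicalType) N (N_gt0 : (0 < N)%N) m
    (Z : nat -> 'cV[T]_(\sum_(i < N) m)) (l : 'cV[T]_m) :
  unstack N_gt0 Z @ \oo --> l -> Z @ \oo --> \mxcol_(i < N) l.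
Proof.
move=> Zl; apply/cvg_mx_entriesP => j c; rewrite mxE.
set s := tagnat.sig1 j; set t := tagnat.sig2 j.
have -> : (fun k => Z k j c) =
    (fun q => unstack N_gt0 Z q t c) \o (fun k => k * N + s)%N.
  by apply: funext => k /=; rewrite -[Z k]submxcolK mxE unstack_block.
apply: cvg_comp_geq.
  by move=> k; rewrite (leq_trans (leq_pmulr k N_gt0)) ?leq_addr.
by move/cvg_mx_entriesP : Zl; apply.
Qed.

Section LinearRecursion.
Context {R : pzRingType} {nx nu : nat}.
Variables (A : 'M[R]_nx) (B : 'M[R]_(nx, nu)).

Fixpoint lti_state (x0 : 'cV[R]_nx) (w : nat -> 'cV[R]_nu) (k : nat) : 'cV[R]_nx :=
  if k is k'.+1 then A *m lti_state x0 w k' + B *m w k' else x0.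

Lemma state_unroll (x : nat -> 'cV[R]_nx) (w : nat -> 'cV[R]_nu) m :
  (forall k, x k.+1 = A *m x k + B *m w k) -> forall i,
  x (m + i)%N = A ^+ i *m x m + \sum_(s < i) A ^+ (i - s.+1) *m B *m w (m + s)%N.
Proof.
move=> xS; elim=> [|i IH]; first by rewrite addn0 expr0 mul1mx big_ord0 addr0.
rewrite addnS xS IH big_ord_recr /= subnn expr0 mul1mx mulmxDr mulmxA addrA.
congr (_ + _ + _); first by rewrite mulmxE -exprS.
rewrite mulmx_sumr; apply: eq_bigr => s _.
by rewrite !mulmxA mulmxE -exprS subSS subnSK.
Qed.

Lemma lti_state_addn x0 w m i :
  lti_state x0 w (m + i) =
  A ^+ i *m lti_state x0 w m + \sum_(s < i) A ^+ (i - s.+1) *m B *m w (m + s)%N.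
Proof. exact: state_unroll. Qed.

End LinearRecursion.

Section RepetitionBlocks.
Context {R : realType} {nx nu ny n : nat}.
Variables (A : 'M[R]_nx) (B : 'M[R]_(nx, nu))
  (C : 'M[R]_(ny, nx)) (D : 'M[R]_(ny, nu)).

Lemma rep_state_mxcol (X : 'cV[R]_nx) (W : nat -> 'cV[R]_nu) :
  rep_A n A *m X + rep_B n A B *m (\mxcol_(s < n) W s : 'cV_(\sum_(i < n) nu)) =
  A ^+ n *m X + \sum_(s < n) A ^+ (n - s.+1) *m B *m W s.
Proof. by rewrite /rep_A /rep_B mul_mxrow_mxcol. Qed.

Lemma rep_output_mxcol (X : 'cV[R]_nx) (W : nat -> 'cV[R]_nu) (r : 'I_n) :
  submxcol (rep_C n A C *m X
            + rep_D n A B C D *m (\mxcol_(s < n) W s : 'cV_(\sum_(i < n) nu))) r =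
  C *m (A ^+ r *m X + \sum_(s < r) A ^+ (r - s.+1) *m B *m W s) + D *m W r.
Proof.
rewrite submxcolD /rep_C /rep_D mxcol_mul mul_mxblock_mxrow !mxcolK.
rewrite (bigD1 r) //= ltnn eqxx mulmxDr !mulmxA -!addrA; congr (_ + _).
rewrite addrC; congr (_ + _).
pose F s := C *m A ^+ (r - s.+1) *m B *m W s.
have -> : \sum_(s < n | s != r) (if (s < r)%N then C *m A ^+ (r - s.+1) *m B
      else if r == s then D else 0) *m W s = \sum_(s < n | (s < r)%N) F s.
  rewrite big_mkcond [RHS]big_mkcond; apply: eq_bigr => s _ /=.
  case: eqVneq => [->|s_neq_r] /=; first by rewrite ltnn.
  by case: ltngtP => // _; rewrite mul0mx.
rewrite mulmx_sumr -(big_mkord (fun s => (s < r)%N) F).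
rewrite -(big_nat_widen 0 r n xpredT F (ltnW (ltn_ord r))) big_mkord.
by apply: eq_bigr => s _; rewrite /F !mulmxA.
Qed.

End RepetitionBlocks.

Lemma rep_fixed_point (R : realType) (nx nu ny n : nat) (A : 'M[R]_nx)
    (B : 'M[R]_(nx, nu)) (C : 'M[R]_(ny, nx)) (D : 'M[R]_(ny, nu))
    (phi : 'cV[R]_ny -> 'cV[R]_nu) ys us xs :
  is_fixed_point A B C D phi ys us xs ->
  is_fixed_point (rep_A n A) (rep_B n A B) (rep_C n A C) (rep_D n A B C D)
    (@rep_phi R nu ny n phi) (stack n ys) (stack n us) xs.
Proof.
case=> xs_eq ys_eq us_eq.
have xs_unroll i : xs = A ^+ i *m xs + \sum_(s < i) A ^+ (i - s.+1) *m B *m us.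
  exact: (@state_unroll _ _ _ A B (fun=> xs) (fun=> us) 0 (fun=> xs_eq) i).
split.
- by rewrite /stack (rep_state_mxcol _ _ _ (fun=> us)) -xs_unroll.
- apply/mxcolP => r.
  by rewrite /stack (rep_output_mxcol _ _ _ _ _ (fun=> us)) -xs_unroll mxcolK.
- by rewrite /rep_phi /stack; apply: eq_mxcol => i; rewrite mxcolK -us_eq.
Qed.

Section UnstackTrajectory.
Context {R : realType} {nx nu ny N : nat} {A : 'M[R]_nx} {B : 'M[R]_(nx, nu)}
  {C : 'M[R]_(ny, nx)} {D : 'M[R]_(ny, nu)} {phi : 'cV[R]_ny -> 'cV[R]_nu}.
Hypothesis N_gt0 : (0 < N)%N.
Context {Y : nat -> 'cV[R]_(\sum_(i < N) ny)} {U : nat -> 'cV[R]_(\sum_(i < N) nu)}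
  {X : nat -> 'cV[R]_nx}.
Hypothesis traj : is_trajectory (rep_A N A) (rep_B N A B) (rep_C N A C)
  (rep_D N A B C D) (@rep_phi R nu ny N phi) Y U X.

Lemma lti_state_unstack_block k :
  lti_state A B (X 0%N) (unstack N_gt0 U) (k * N) = X k.
Proof.
elim: k => [//|k IH]; rewrite mulSnr lti_state_addn IH.
have [-> _ _] := traj k; rewrite (mxcol_unstack N_gt0 U k).
by rewrite (rep_state_mxcol _ _ _ (fun j => unstack N_gt0 U (k * N + j))).
Qed.

Lemma unstack_trajectory : is_trajectory A B C D phi
  (unstack N_gt0 Y) (unstack N_gt0 U) (lti_state A B (X 0%N) (unstack N_gt0 U)).
Proof.
apply: (block_index_ind N_gt0) => k s; have [_ Yk Uk] := traj k; split=> //.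
- rewrite unstack_block Yk (mxcol_unstack N_gt0 U k).
  rewrite (rep_output_mxcol _ _ _ _ _ (fun j => unstack N_gt0 U (k * N + j))).
  by rewrite lti_state_addn lti_state_unstack_block.
- by rewrite !unstack_block Uk /rep_phi mxcolK.
Qed.

End UnstackTrajectory.

Lemma rep_converges_to (R : realType) (nx nu ny N : nat) (A : 'M[R]_nx)
    (B : 'M[R]_(nx, nu)) (C : 'M[R]_(ny, nx)) (D : 'M[R]_(ny, nu))
    (phi : 'cV[R]_ny -> 'cV[R]_nu) ys us xs :
  (0 < N)%N -> converges_to A B C D phi ys us xs ->
  converges_to (rep_A N A) (rep_B N A B) (rep_C N A C) (rep_D N A B C D)
    (@rep_phi R nu ny N phi) (stack N ys) (stack N us) xs.
Proof.
move=> N_gt0 conv Y U X traj.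
have [Yys Uus Xxs] := conv _ _ _ (unstack_trajectory N_gt0 traj).
split; [exact: cvg_unstack Yys | exact: cvg_unstack Uus |].
have -> : X = lti_state A B (X 0%N) (unstack N_gt0 U) \o (fun k => k * N)%N.
  by apply: funext => k /=; rewrite (lti_state_unstack_block N_gt0 traj).
by apply: cvg_comp_geq Xxs => k; exact: leq_pmulr.
Qed.

Theorem proposition7p3 (R : realType) (nx nu ny : nat)
  (A : 'M[R]_nx) (B : 'M[R]_(nx, nu)) (C : 'M[R]_(ny, nx)) (D : 'M[R]_(ny, nu))
  (phi : 'cV[R]_ny -> 'cV[R]_nu)
  (ys : 'cV[R]_ny) (us : 'cV[R]_nu) (xs : 'cV[R]_nx) :
  is_fixed_point A B C D phi ys us xs ->
  converges_to A B C D phi ys us xs ->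
  forall n : nat, (1 <= n)%N ->
    is_fixed_point (rep_A n A) (rep_B n A B) (rep_C n A C) (rep_D n A B C D)
      (@rep_phi R nu ny n phi) (stack n ys) (stack n us) xs /\
    converges_to (rep_A n A) (rep_B n A B) (rep_C n A C) (rep_D n A B C D)
      (@rep_phi R nu ny n phi) (stack n ys) (stack n us) xs.
Proof.
move=> fixed conv n n_gt0; split; first exact: rep_fixed_point.
exact: rep_converges_to.
Qed.
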